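(* Let $g=2G\,du\,(dv+v\beta_A dx^A)+\mu_{AB}dx^Adx^B$ be a metric in Rácz–Wald coordinates $\{u,v,x^A\}$, where $G$ is a nowhere vanishing function, $\boldsymbol\beta=\beta_Adx^A$ a one-form and $\mu_{AB}$ a Riemannian metric on the codimension-two surfaces $\{u,v=\text{const}\}$, all depending only on $(s=uv,x^A)$. Assume the Killing vector $\eta=u\partial_u-v\partial_v$ is integrable with respect to $g$, i.e. $\boldsymbol\eta\wedge d\boldsymbol\eta=0$ for $\boldsymbol\eta=g(\eta,\cdot)$. Then $\boldsymbol\beta$ is closed, and hence locally exact. *)

From HB Require Import structures.
From mathcomp Require Import all_boot all_order all_algebra.
From mathcomp Require Import all_classical all_reals all_analysis.
Set Implicit Arguments. Unset Strict Implicit. Unset Printing Implicit Defensive.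
Import Order.TTheory GRing.Theory Num.Theory.
Import numFieldNormedType.Exports.
Local Open Scope classical_set_scope.
Local Open Scope ring_scope.

(* Spacetime points p : 'rV[R]_(n.+2) with coordinates
   index 0 = u, index 1 = v, index (2 + A) = x^A  (A : 'I_n).
   Functions on the "orbit space" take q : 'rV[R]_(n.+1) with
   index 0 = s = u v and index (1 + A) = x^A. *)

Definition pu {R : realType} {n : nat} (p : 'rV[R]_(n.+2)) : R := p ord0 ord0.
Definition pv {R : realType} {n : nat} (p : 'rV[R]_(n.+2)) : R :=
  p ord0 (lift ord0 ord0).
Definition px {R : realType} {n : nat} (p : 'rV[R]_(n.+2)) : 'rV[R]_n :=
  \row_(k < n) p ord0 (rshift 2 k).

Definition sx {R : realType} {n : nat} (p : 'rV[R]_(n.+2)) : 'rV[R]_(n.+1) :=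
  \row_(j < n.+1) (if unlift ord0 j is Some k then px p ord0 k
                   else pu p * pv p).

Definition dpart {R : realType} {m : nat} (i : 'I_m) (f : 'rV[R]_m -> R)
  (p : 'rV[R]_m) : R := derive f p (delta_mx ord0 i).

Definition C1_on {R : realType} {m : nat} (D : set 'rV[R]_m)
  (f : 'rV[R]_m -> R) : Prop :=
  forall q, D q -> differentiable f q /\
    forall j : 'I_m, {for q, continuous (dpart j f)}.

(* Components g_{ij} of  g = 2G du (dv + v beta_A dx^A) + mu_AB dx^A dx^B
   (symmetrized products). *)
Definition gRW {R : realType} {n : nat} (G : 'rV[R]_(n.+1) -> R)
  (beta : 'I_n -> 'rV[R]_(n.+1) -> R) (mu : 'I_n -> 'I_n -> 'rV[R]_(n.+1) -> R)
  (i j : 'I_(n.+2)) (p : 'rV[R]_(n.+2)) : R :=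
  match @fintype.split 2 n i, @fintype.split 2 n j with
  | inl a, inl b => if (a : nat) != b then G (sx p) else 0
  | inl a, inr B => if (a : nat) == 0%N then G (sx p) * pv p * beta B (sx p) else 0
  | inr A, inl b => if (b : nat) == 0%N then G (sx p) * pv p * beta A (sx p) else 0
  | inr A, inr B => mu A B (sx p)
  end.

Definition etaRW {R : realType} {n : nat} (i : 'I_(n.+2)) (p : 'rV[R]_(n.+2)) : R :=
  match @fintype.split 2 n i with
  | inl a => if (a : nat) == 0%N then pu p else - pv p
  | inr _ => 0
  end.

Definition etaflat {R : realType} {n : nat} (G : 'rV[R]_(n.+1) -> R)
  (beta : 'I_n -> 'rV[R]_(n.+1) -> R) (mu : 'I_n -> 'I_n -> 'rV[R]_(n.+1) -> R)
  (i : 'I_(n.+2)) (p : 'rV[R]_(n.+2)) : R :=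
  \sum_(j < n.+2) etaRW j p * gRW G beta mu j i p.

Definition betaST {R : realType} {n : nat} (beta : 'I_n -> 'rV[R]_(n.+1) -> R)
  (i : 'I_(n.+2)) (p : 'rV[R]_(n.+2)) : R :=
  match @fintype.split 2 n i with
  | inl _ => 0
  | inr A => beta A (sx p)
  end.

(* w /\ dw = 0 on W, written in components (w /\ dw)_{ijk} = 0 *)
Definition integrable_on {R : realType} {m : nat} (W : set 'rV[R]_m)
  (w : 'I_m -> 'rV[R]_m -> R) : Prop :=
  forall p, W p -> forall i j k : 'I_m,
    w i p * (dpart j (w k) p - dpart k (w j) p)
  + w j p * (dpart k (w i) p - dpart i (w k) p)
  + w k p * (dpart i (w j) p - dpart j (w i) p) = 0.

Definition closed_on {R : realType} {m : nat} (W : set 'rV[R]_m)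
  (w : 'I_m -> 'rV[R]_m -> R) : Prop :=
  forall p, W p -> forall i j : 'I_m, dpart i (w j) p = dpart j (w i) p.

(* Write s = u v.  The one-form eta^flat = g(eta, .) is G (u dv - v du) + s G beta.
   Off the axes (u v <> 0) the components (u, v, A) and (u, A, B) of
   eta^flat /\ d eta^flat are -2 s^2 G^2 d_s beta_A and
   s v G^2 (s (beta_B d_s beta_A - beta_A d_s beta_B) + d_B beta_A - d_A beta_B),
   so integrability forces d_s beta_A = 0 and d_B beta_A = d_A beta_B there.  Both are
   identities between continuous functions of (s, x), so they extend to the axes by
   approximating points on them by points off them; pulled back along
   (u, v, x) |-> (u v, x) they say exactly that beta is closed. *)

From HB Require Import structures.
From mathcomp Require Import all_boot all_order all_algebra.
From mathcomp Require Import all_classical all_reals all_analysis.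
From mathcomp Require Import ring.
Import Order.TTheory GRing.Theory Num.Theory.
Import numFieldNormedType.Exports.
Local Open Scope classical_set_scope.
Local Open Scope ring_scope.
Set Implicit Arguments. Unset Strict Implicit. Unset Printing Implicit Defensive.

Variant coord_spec (n : nat) : 'I_(n.+2) -> Type :=
  | CoordU : coord_spec ord0
  | CoordV : coord_spec (lift ord0 ord0)
  | CoordX (A : 'I_n) : coord_spec (rshift 2 A).

Lemma coordP n (i : 'I_(n.+2)) : coord_spec i.
Proof.
case: (unliftP ord0 i) => [i'|] ->; first case: (unliftP ord0 i') => [A|] ->.
- have -> : lift ord0 (lift ord0 A) = rshift 2 A by apply: val_inj.
  exact: CoordX.
- exact: CoordV.
- exact: CoordU.
Qed.

Lemma splitU n : @fintype.split 2 n ord0 = inl ord0.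
Proof.
have -> : (ord0 : 'I_(2 + n)) = lshift n (ord0 : 'I_2) by apply: val_inj.
exact: (unsplitK (inl _)).
Qed.

Lemma splitV n : @fintype.split 2 n (lift ord0 ord0) = inl (lift ord0 ord0).
Proof.
have -> : (lift ord0 ord0 : 'I_(2 + n)) = lshift n (lift ord0 ord0 : 'I_2).
  by apply: val_inj.
exact: (unsplitK (inl _)).
Qed.

Lemma splitX n (A : 'I_n) : @fintype.split 2 n (rshift 2 A) = inr A.
Proof. exact: (unsplitK (inr _)). Qed.

Section Coordinates.
Variables (R : realType) (n : nat).
Implicit Types (p v : 'rV[R]_(n.+2)) (h : R).

Lemma puD h v p : pu (h *: v + p) = h * pu v + pu p.
Proof. by rewrite /pu !mxE. Qed.

Lemma pvD h v p : pv (h *: v + p) = h * pv v + pv p.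
Proof. by rewrite /pv !mxE. Qed.

Lemma pu_delta j : pu (delta_mx ord0 j : 'rV[R]_(n.+2)) = (ord0 == j)%:R.
Proof. by rewrite /pu mxE. Qed.

Lemma pv_delta j : pv (delta_mx ord0 j : 'rV[R]_(n.+2)) = (lift ord0 ord0 == j)%:R.
Proof. by rewrite /pv mxE. Qed.

Lemma sx_lineU h p :
  sx (h *: delta_mx ord0 ord0 + p) = h *: (pv p *: delta_mx ord0 ord0) + sx p.
Proof.
apply/rowP => k; rewrite !mxE.
by case: (unliftP ord0 k) => [k'|] ->; rewrite /pu /pv /px !mxE /= ?eqxx; ring.
Qed.

Lemma sx_lineV h p :
  sx (h *: delta_mx ord0 (lift ord0 ord0) + p) = h *: (pu p *: delta_mx ord0 ord0) + sx p.
Proof.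
apply/rowP => k; rewrite !mxE.
by case: (unliftP ord0 k) => [k'|] ->; rewrite /pu /pv /px !mxE /= ?eqxx; ring.
Qed.

Lemma sx_lineX (B : 'I_n) h p :
  sx (h *: delta_mx ord0 (rshift 2 B) + p) = h *: delta_mx ord0 (lift ord0 B) + sx p.
Proof.
apply/rowP => k; rewrite !mxE.
case: (unliftP ord0 k) => [k'|] ->; rewrite /pu /pv /px !mxE /= ?eqxx; last by ring.
by rewrite (inj_eq (@lift_inj _ ord0)) (inj_eq (@rshift_inj 2 n)).
Qed.

Lemma sx_lineUV h p :
  sx (h *: (delta_mx ord0 ord0 + delta_mx ord0 (lift ord0 ord0)) + p) =
  ((h + pu p) * (h + pv p) - pu p * pv p) *: delta_mx ord0 ord0 + sx p.
Proof.
apply/rowP => k; rewrite !mxE.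
by case: (unliftP ord0 k) => [k'|] ->; rewrite /pu /pv /px !mxE /= ?eqxx; ring.
Qed.

End Coordinates.

Section DirectionalDerivatives.
Variable R : realType.

Lemma derive_line_eq {U V W : normedModType R} {F : U -> W} {f : V -> W} {p e q d} :
  (forall h : R, F (h *: e + p) = f (h *: d + q)) ->
  'D_e F p = 'D_d f q /\ (derivable f q d -> derivable F p e).
Proof.
move=> Ff.
have Fp : F p = f q by have := Ff 0; rewrite !scale0r !add0r.
rewrite /derive /derivable.
have -> : (fun h : R => h^-1 *: ((F \o shift p) (h *: e) - F p)) =
          (fun h : R => h^-1 *: ((f \o shift q) (h *: d) - f q)).
  by apply/funext => h /=; rewrite Ff Fp.
by [].
Qed.

Lemma derive_affine_line {V W : normedModType R} {F : V -> W} {p e c} :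
  (forall h : R, F (h *: e + p) = h *: c + F p) -> derivable F p e /\ 'D_e F p = c.
Proof.
move=> Fline.
have quotient_cst : \forall h \near 0^', h^-1 *: ((F \o shift p) (h *: e) - F p) = c.
  near=> h; have h_neq0 : h != 0 by near: h; exact: nbhs_dnbhs_neq.
  by rewrite /= Fline addrK scalerA mulVf // scale1r.
split; first exact: (is_cvg_near_cst c).
exact: lim_near_cst quotient_cst.
Unshelve. all: by end_near.
Qed.

(* [deriveM] with its [*:] unfolded to [*], so that [ring] applies to the result. *)
Lemma deriveM_scalar (V : normedModType R) (f g : V -> R) x v :
  derivable f x v -> derivable g x v ->
  'D_v (f * g) x = f x * 'D_v g x + g x * 'D_v f x.
Proof. exact: deriveM. Qed.

End DirectionalDerivatives.

Section PartialsInRaczWaldCoordinates.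
Variables (R : realType) (n : nat).
Implicit Types (p v : 'rV[R]_(n.+2)) (Phi : 'rV[R]_(n.+1) -> R).

Lemma derivable_pu p v : derivable (@pu R n) p v.
Proof. by have [] := derive_affine_line (fun h => puD h v p). Qed.

Lemma dpart_pu p j : dpart j (@pu R n) p = (ord0 == j)%:R.
Proof. by rewrite /dpart (derive_affine_line (fun h => puD h _ p)).2 pu_delta. Qed.

Lemma derivable_pv p v : derivable (@pv R n) p v.
Proof. by have [] := derive_affine_line (fun h => pvD h v p). Qed.

Lemma dpart_pv p j : dpart j (@pv R n) p = (lift ord0 ord0 == j)%:R.
Proof. by rewrite /dpart (derive_affine_line (fun h => pvD h _ p)).2 pv_delta. Qed.

Lemma derive_comp_sx Phi p e d :
  differentiable Phi (sx p) -> (forall h, sx (h *: e + p) = h *: d + sx p) ->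
  derivable (Phi \o sx) p e /\ 'D_e (Phi \o sx) p = 'D_d Phi (sx p).
Proof.
move=> dPhi sx_line.
have [-> derivable_line] :=
  derive_line_eq (F := Phi \o sx) (f := Phi) (fun h => congr1 Phi (sx_line h)).
by split=> //; apply: derivable_line; exact: diff_derivable.
Qed.

Lemma derivable_comp_sx Phi p j :
  differentiable Phi (sx p) -> derivable (Phi \o sx) p (delta_mx ord0 j).
Proof.
move=> dPhi; case: (coordP j) => [||B].
- exact: (derive_comp_sx dPhi (fun h => sx_lineU h p)).1.
- exact: (derive_comp_sx dPhi (fun h => sx_lineV h p)).1.
- exact: (derive_comp_sx dPhi (fun h => sx_lineX B h p)).1.
Qed.

Lemma dpart_comp_sxU Phi p : differentiable Phi (sx p) ->
  dpart ord0 (Phi \o sx) p = pv p * dpart ord0 Phi (sx p).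
Proof.
move=> dPhi; rewrite /dpart (derive_comp_sx dPhi (fun h => sx_lineU h p)).2.
by rewrite !deriveE // linearZ.
Qed.

Lemma dpart_comp_sxV Phi p : differentiable Phi (sx p) ->
  dpart (lift ord0 ord0) (Phi \o sx) p = pu p * dpart ord0 Phi (sx p).
Proof.
move=> dPhi; rewrite /dpart (derive_comp_sx dPhi (fun h => sx_lineV h p)).2.
by rewrite !deriveE // linearZ.
Qed.

Lemma dpart_comp_sxX Phi p B : differentiable Phi (sx p) ->
  dpart (rshift 2 B) (Phi \o sx) p = dpart (lift ord0 B) Phi (sx p).
Proof. by move=> dPhi; rewrite /dpart (derive_comp_sx dPhi (fun h => sx_lineX B h p)).2. Qed.

End PartialsInRaczWaldCoordinates.

Arguments derivable_pu {R n} p v.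
Arguments derivable_pv {R n} p v.
Arguments derivable_comp_sx {R n Phi p} j.

Section EtaFlat.
Variables (R : realType) (n : nat) (G : 'rV[R]_(n.+1) -> R).
Variables (beta : 'I_n -> 'rV[R]_(n.+1) -> R) (mu : 'I_n -> 'I_n -> 'rV[R]_(n.+1) -> R).
Local Notation w := (etaflat G beta mu).

Lemma etaflatE i p : w i p = pu p * gRW G beta mu ord0 i p
                           - pv p * gRW G beta mu (lift ord0 ord0) i p.
Proof.
rewrite /etaflat !big_ord_recl big1 => [|j _]; last first.
  have -> : lift ord0 (lift ord0 j) = rshift 2 j :> 'I_(n.+2) by apply: val_inj.
  by rewrite /etaRW splitX mul0r.
by rewrite /etaRW splitU splitV /= addr0 mulNr.
Qed.

Lemma etaflatU : w ord0 = - (pv * (G \o sx)).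
Proof. by apply/funext => p; rewrite etaflatE /gRW splitU splitV !fctE /=; ring. Qed.

Lemma etaflatV : w (lift ord0 ord0) = pu * (G \o sx).
Proof. by apply/funext => p; rewrite etaflatE /gRW splitU splitV !fctE /=; ring. Qed.

Lemma etaflatX A : w (rshift 2 A) = pu * pv * ((G \o sx) * (beta A \o sx)).
Proof. by apply/funext => p; rewrite etaflatE /gRW splitU splitV splitX !fctE /=; ring. Qed.

End EtaFlat.

Section EtaFlatPartials.
Variables (R : realType) (n : nat) (G : 'rV[R]_(n.+1) -> R).
Variables (beta : 'I_n -> 'rV[R]_(n.+1) -> R) (mu : 'I_n -> 'I_n -> 'rV[R]_(n.+1) -> R).
Variable p : 'rV[R]_(n.+2).
Hypothesis dG : differentiable G (sx p).
Hypothesis dbeta : forall A, differentiable (beta A) (sx p).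
Local Notation w := (etaflat G beta mu).
Local Notation q := (sx p).
Local Notation dpu j := (derivable_pu p (delta_mx ord0 j)).
Local Notation dpv j := (derivable_pv p (delta_mx ord0 j)).
Local Notation dGsx j := (derivable_comp_sx j dG).
Local Notation dbetasx A j := (derivable_comp_sx j (dbeta A)).

Lemma dpart_etaflatU j : dpart j (w ord0) p =
  - (pv p * dpart j (G \o sx) p + G q * dpart j pv p).
Proof.
by rewrite etaflatU /dpart (deriveN (derivableM (dpv j) (dGsx j))) (deriveM_scalar (dpv j) (dGsx j)).
Qed.

Lemma dpart_etaflatV j : dpart j (w (lift ord0 ord0)) p =
  pu p * dpart j (G \o sx) p + G q * dpart j pu p.
Proof. by rewrite etaflatV /dpart (deriveM_scalar (dpu j) (dGsx j)). Qed.

Lemma dpart_etaflatX A j : dpart j (w (rshift 2 A)) p =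
  pu p * pv p * (G q * dpart j (beta A \o sx) p + beta A q * dpart j (G \o sx) p)
  + G q * beta A q * (pu p * dpart j pv p + pv p * dpart j pu p).
Proof.
rewrite etaflatX /dpart (deriveM_scalar (derivableM (dpu j) (dpv j))
  (derivableM (dGsx j) (dbetasx A j))).
rewrite (deriveM_scalar (dpu j) (dpv j)) (deriveM_scalar (dGsx j) (dbetasx A j)) !fctE /=.
ring.
Qed.

End EtaFlatPartials.

Definition wedge_dw (R : realType) m (w : 'I_m -> 'rV[R]_m -> R) (p : 'rV[R]_m)
  (i j k : 'I_m) : R :=
    w i p * (dpart j (w k) p - dpart k (w j) p)
  + w j p * (dpart k (w i) p - dpart i (w k) p)
  + w k p * (dpart i (w j) p - dpart j (w i) p).

Section WedgeAtGenericPoint.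
Variables (R : realType) (n : nat) (G : 'rV[R]_(n.+1) -> R).
Variables (beta : 'I_n -> 'rV[R]_(n.+1) -> R) (mu : 'I_n -> 'I_n -> 'rV[R]_(n.+1) -> R).
Variable p : 'rV[R]_(n.+2).
Hypothesis dG : differentiable G (sx p).
Hypothesis dbeta : forall A, differentiable (beta A) (sx p).
Local Notation w := (etaflat G beta mu).
Local Notation q := (sx p).

Lemma wedge_dw_etaflatUVX A :
  wedge_dw w p ord0 (lift ord0 ord0) (rshift 2 A) =
  -2 * (pu p * pv p) ^+ 2 * G q ^+ 2 * dpart ord0 (beta A) q.
Proof.
rewrite /wedge_dw !(dpart_etaflatU, dpart_etaflatV, dpart_etaflatX) //.
rewrite !(dpart_comp_sxU, dpart_comp_sxV, dpart_comp_sxX) // !(dpart_pu, dpart_pv) /=.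
rewrite etaflatU etaflatV etaflatX !fctE /=.
ring.
Qed.

Lemma wedge_dw_etaflatUXX (A B : 'I_n) :
  wedge_dw w p ord0 (rshift 2 A) (rshift 2 B) =
  pu p * pv p ^+ 2 * G q ^+ 2 *
  (pu p * pv p * (beta B q * dpart ord0 (beta A) q - beta A q * dpart ord0 (beta B) q)
   + dpart (lift ord0 B) (beta A) q - dpart (lift ord0 A) (beta B) q).
Proof.
rewrite /wedge_dw !(dpart_etaflatU, dpart_etaflatV, dpart_etaflatX) //.
rewrite !(dpart_comp_sxU, dpart_comp_sxV, dpart_comp_sxX) // !(dpart_pu, dpart_pv) /=.
rewrite etaflatU !etaflatX !fctE /=.
ring.
Qed.

Hypotheses (u_neq0 : pu p != 0) (v_neq0 : pv p != 0) (G_neq0 : G q != 0).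
Hypothesis wedge_eq0 : forall i j k, wedge_dw w p i j k = 0.

Lemma dpart_s_beta_eq0 A : dpart ord0 (beta A) q = 0.
Proof.
have /esym/eqP := wedge_dw_etaflatUVX A; rewrite wedge_eq0 !mulf_eq0 oppr_eq0 pnatr_eq0.
by rewrite (negbTE u_neq0) (negbTE v_neq0) (negbTE G_neq0) => /eqP.
Qed.

Lemma dpart_x_beta_sym (A B : 'I_n) :
  dpart (lift ord0 B) (beta A) q = dpart (lift ord0 A) (beta B) q.
Proof.
have /esym/eqP := wedge_dw_etaflatUXX A B.
rewrite wedge_eq0 !dpart_s_beta_eq0 !mulr0 subrr mulr0 add0r !mulf_eq0.
by rewrite (negbTE u_neq0) (negbTE v_neq0) (negbTE G_neq0) subr_eq0 => /eqP.
Qed.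

End WedgeAtGenericPoint.

Lemma quadratic_curve_continuous (R : realType) (V : normedModType R) (a b : R) (d q : V) :
  {for 0, continuous (fun h : R => ((h + a) * (h + b) - a * b) *: d + q)}.
Proof.
apply: continuousD; last exact: cvg_cst.
apply: continuousZr_tmp; apply: continuousB; last exact: cvg_cst.
by apply: continuousM; apply: continuousD; solve [exact: cvg_id | exact: cvg_cst].
Qed.

Lemma near0_addr_neq0 (R : realType) (a : R) : \forall h \near 0^', h + a != 0.
Proof.
have [->|a_neq0] := eqVneq a 0.
  by near=> h; rewrite addr0; near: h; exact: nbhs_dnbhs_neq.
near=> h; have : `|h| < `|a| by near: h; apply: dnbhs0_lt; rewrite normr_gt0.
by apply: contraTneq => /eqP; rewrite addr_eq0 => /eqP ->; rewrite normrN ltxx.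
Unshelve. all: by end_near.
Qed.

Lemma eq0_near_curve (R : realType) (V : normedModType R) (psi : V -> R) (c : R -> V) :
  {for c 0, continuous psi} -> {for 0, continuous c} ->
  (\forall h \near 0^', psi (c h) = 0) -> psi (c 0) = 0.
Proof.
move=> psi_cont c_cont psi_c0.
have /continuous_withinNx psi_c_cvg : {for 0, continuous (psi \o c)}.
  exact: continuous_comp.
by rewrite -[psi (c 0)](cvg_lim _ psi_c_cvg) //; exact: lim_near_cst.
Qed.

Lemma open_near_line (R : realType) (V : normedModType R) (W : set V) (p e : V) :
  open W -> W p -> \forall h \near 0^', W (h *: e + p).
Proof.
move=> oW Wp; apply: cvg_within.
have line_cont : {for 0, continuous (fun h : R => h *: e + p)}.
  by apply: continuousD; [apply: continuousZr_tmp; exact: cvg_id | exact: cvg_cst].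
apply: line_cont; rewrite /= scale0r add0r.
exact: open_nbhs_nbhs.
Qed.

(* p + h (e_u + e_v) lies off the axes for small h <> 0, and sx maps this line to a
   quadratic curve through sx p. *)
Lemma eq0_off_axes (R : realType) n (W : set 'rV[R]_(n.+2)) (psi : 'rV[R]_(n.+1) -> R) p :
  open W -> W p -> {for sx p, continuous psi} ->
  (forall p', W p' -> pu p' != 0 -> pv p' != 0 -> psi (sx p') = 0) ->
  psi (sx p) = 0.
Proof.
move=> oW Wp psi_cont psi_generic.
pose e : 'rV[R]_(n.+2) := delta_mx ord0 ord0 + delta_mx ord0 (lift ord0 ord0).
pose c h := ((h + pu p) * (h + pv p) - pu p * pv p) *: delta_mx ord0 ord0 + sx p.
have c0 : c 0 = sx p by rewrite /c !add0r subrr scale0r add0r.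
rewrite -c0; apply: eq0_near_curve; rewrite ?c0 //; first exact: quadratic_curve_continuous.
near=> h; rewrite /c -sx_lineUV; apply: psi_generic.
- by near: h; exact: open_near_line.
- rewrite puD /pu !mxE /= addr0 mulr1; near: h; exact: near0_addr_neq0.
- rewrite pvD /pv !mxE /= add0r mulr1; near: h; exact: near0_addr_neq0.
Unshelve. all: by end_near.
Qed.

Section BetaClosed.
Variables (R : realType) (n : nat) (beta : 'I_n -> 'rV[R]_(n.+1) -> R).

Lemma betaSTU : betaST beta ord0 = cst 0.
Proof. by apply/funext => p; rewrite /betaST splitU. Qed.

Lemma betaSTV : betaST beta (lift ord0 ord0) = cst 0.
Proof. by apply/funext => p; rewrite /betaST splitV. Qed.

Lemma betaSTX A : betaST beta (rshift 2 A) = beta A \o sx.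
Proof. by apply/funext => p; rewrite /betaST splitX. Qed.

Lemma betaST_closed_at (p : 'rV[R]_(n.+2)) :
  (forall A, differentiable (beta A) (sx p)) ->
  (forall A, dpart ord0 (beta A) (sx p) = 0) ->
  (forall A B : 'I_n,
     dpart (lift ord0 B) (beta A) (sx p) = dpart (lift ord0 A) (beta B) (sx p)) ->
  forall i j, dpart i (betaST beta j) p = dpart j (betaST beta i) p.
Proof.
move=> dbeta ds_beta dx_beta_sym i j.
case: (coordP i) => [||A]; case: (coordP j) => [||B];
  rewrite ?betaSTU ?betaSTV ?betaSTX ?(dpart_comp_sxU (dbeta _)) ?(dpart_comp_sxV (dbeta _))
          ?(dpart_comp_sxX _ (dbeta _)) ?ds_beta /dpart ?derive_cst ?mulr0 //.
exact: dx_beta_sym.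
Qed.

End BetaClosed.

Theorem mainTheorem5 (R : realType) (n : nat)
  (D : set 'rV[R]_(n.+1)) (W : set 'rV[R]_(n.+2))
  (G : 'rV[R]_(n.+1) -> R) (beta : 'I_n -> 'rV[R]_(n.+1) -> R)
  (mu : 'I_n -> 'I_n -> 'rV[R]_(n.+1) -> R) :
  open D -> open W -> (forall p, W p -> D (sx p)) ->
  C1_on D G -> (forall A, C1_on D (beta A)) ->
  (forall A B, C1_on D (mu A B)) ->
  (forall q, D q -> G q != 0) ->
  (forall q, D q -> forall A B, mu A B q = mu B A q) ->
  (forall q, D q -> forall xi : 'rV[R]_n, xi != 0 ->
       0 < \sum_(A < n) \sum_(B < n) xi ord0 A * mu A B q * xi ord0 B) ->
  integrable_on W (etaflat G beta mu) ->
  closed_on W (betaST beta).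
Proof.
move=> _ oW WD CG Cbeta _ G_neq0 _ _ integrable p Wp.
have dG p' : W p' -> differentiable G (sx p') by move=> /WD /CG [].
have dbeta p' : W p' -> forall A, differentiable (beta A) (sx p').
  by move=> /WD Dp' A; have [] := Cbeta A _ Dp'.
have beta_cont A j : {for sx p, continuous (dpart j (beta A))}.
  by have [] := Cbeta A _ (WD _ Wp).
have ds_beta_off_axes A p' : W p' -> pu p' != 0 -> pv p' != 0 ->
    dpart ord0 (beta A) (sx p') = 0.
  move=> Wp' u_neq0 v_neq0; have G_neq0' := G_neq0 _ (WD _ Wp').
  exact: dpart_s_beta_eq0 (dG _ Wp') (dbeta _ Wp') u_neq0 v_neq0 G_neq0' (integrable _ Wp') A.
have dx_beta_sym_off_axes A B p' : W p' -> pu p' != 0 -> pv p' != 0 ->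
    dpart (lift ord0 B) (beta A) (sx p') - dpart (lift ord0 A) (beta B) (sx p') = 0.
  move=> Wp' u_neq0 v_neq0; have G_neq0' := G_neq0 _ (WD _ Wp').
  apply/eqP; rewrite subr_eq0; apply/eqP.
  exact: dpart_x_beta_sym (dG _ Wp') (dbeta _ Wp') u_neq0 v_neq0 G_neq0' (integrable _ Wp') A B.
apply: betaST_closed_at => [|A|A B]; first exact: dbeta.
  exact: eq0_off_axes oW Wp (beta_cont A ord0) (ds_beta_off_axes A).
apply/eqP; rewrite -subr_eq0; apply/eqP.
exact: eq0_off_axes oW Wp (continuousB (beta_cont _ _) (beta_cont _ _)) (dx_beta_sym_off_axes A B).
Qed.
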